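(* Let $a,b\in\mathbb{R}$ and let $f(z)=\overline{z}^4-z^2-az-b$ for $z\in\mathbb{C}$. Suppose $\Delta_1(a,b)\,\Delta_2(a,b)\,\Delta_3(a,b)\neq 0$. Then the number $\mathscr{Z}_f$ of distinct zeros of $f$ in $\mathbb{C}$ satisfies $4\le \mathscr{Z}_f\le 10$. Both bounds are attained for such parameters.
   Context: Write $z=x+iy$. Then $f(z)=p_1(x,y)-i\,y\,p_2(x,y)$, where $p_1(x,y)=x^4+y^4-6x^2y^2-x^2+y^2-ax-b$ and $p_2(x,y)=4xy^2-4x^3-2x-a$. The polynomials $\Delta_1,\Delta_2,\Delta_3\in\mathbb{Z}[a,b]$ are defined by $\Delta_1=36a^2+125a^4-144b-560a^2b+384b^2-256b^3$, $\Delta_2=-6912-14976a^2+13552a^4-32616a^6+91125a^8+13824b+8832a^2b-36000a^4b-699840a^6b+66816b^2+566272a^2b^2+1645056a^4b^2-278528b^3-1144832a^2b^3-152064a^4b^3+401408b^4+589824a^2b^4-262144b^5+65536b^6$, $\Delta_3=-4a^2+27a^4+16b-144a^2b+128b^2+256b^3$. The curve $\{(a,b)\in\mathbb{R}^2:\Delta_1\Delta_2\Delta_3=0\}$ is the discriminant curve of the family. Its complement in $\mathbb{R}^2$ has finitely many connected components, and the number of zeros of $f$ is constant on each component. *)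

From Stdlib Require Import Reals List.
From Coquelicot Require Import Coquelicot.
Open Scope R_scope.

Definition f (a b : R) (z : C) : C :=
  Cminus (Cminus (Cminus
    (Cmult (Cmult (Cconj z) (Cconj z)) (Cmult (Cconj z) (Cconj z)))
    (Cmult z z)) (Cmult (RtoC a) z)) (RtoC b).

Definition Delta1 (a b : R) : R :=
  36*a^2 + 125*a^4 - 144*b - 560*a^2*b + 384*b^2 - 256*b^3.

Definition Delta2 (a b : R) : R :=
  -6912 - 14976*a^2 + 13552*a^4 - 32616*a^6 + 91125*a^8 + 13824*b
  + 8832*a^2*b - 36000*a^4*b - 699840*a^6*b + 66816*b^2 + 566272*a^2*b^2
  + 1645056*a^4*b^2 - 278528*b^3 - 1144832*a^2*b^3 - 152064*a^4*b^3
  + 401408*b^4 + 589824*a^2*b^4 - 262144*b^5 + 65536*b^6.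

Definition Delta3 (a b : R) : R :=
  -4*a^2 + 27*a^4 + 16*b - 144*a^2*b + 128*b^2 + 256*b^3.

Definition num_zeros (a b : R) (n : nat) : Prop :=
  exists l : list C, NoDup l /\ (forall z : C, In z l <-> f a b z = 0) /\ length l = n.

From Pilot Require Import Defs.
From Stdlib Require Import Reals List Lra Psatz Classical ClassicalEpsilon.
From Coquelicot Require Import Coquelicot.
Open Scope R_scope.

(* Writing z = x + iy, f z = 0 iff p1 = 0 and y p2 = 0.  Real zeros are the roots
   of the quartic q, so there are at most 4 of them.  For a nonreal zero, p2 = 0
   gives y^2 = s a x, and eliminating a from p1 shows that x is a root of the
   sextic G; every such x with s a x > 0 carries exactly the two zeros
   (x, +-sqrt (s a x)).  The symmetry (a, z) -> (-a, -z) reduces to a >= 0.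
   For a > 0 write a = 4c^3 + 2c with c > 0, so that s a x > 0 exactly when
   x > 0 or x < -c.  G has at most one positive root and, after the shift
   x = -c - t, a sign argument on the coefficients of Gt leaves at most two roots
   below -c: hence at most 4 + 2 (1 + 2) = 10 zeros.  Conversely G 0 = -a^2 < 0
   forces a positive root of G, and G (-c) = -16 c^2 q (-c): if q (-c) < 0 the
   quartic has two real roots, if q (-c) > 0 then G has a root below -c, and
   q (-c) = 0 is the curve b = c^2 + 5c^4 on which Delta1 vanishes.  The case
   a = 0 is solved by radicals. *)

Section Counting.
Context {T : Type}.

Definition at_most (n : nat) (P : T -> Prop) : Prop :=
  exists L : list T, (length L <= n)%nat /\ forall x, P x -> In x L.

Definition at_least (n : nat) (P : T -> Prop) : Prop :=
  exists l : list T, NoDup l /\ length l = n /\ forall x, In x l -> P x.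

Lemma at_most_impl m n (P Q : T -> Prop) :
  (m <= n)%nat -> (forall x, Q x -> P x) -> at_most m P -> at_most n Q.
Proof. intros hmn hQP [L [hL HL]]. exists L. split; [lia | auto]. Qed.

Lemma at_most_list (L : list T) : at_most (length L) (fun x => In x L).
Proof. exists L. auto. Qed.

Lemma at_most_0 (P : T -> Prop) : (forall x, ~ P x) -> at_most 0 P.
Proof. intros hP. exists nil. split; [auto | intros x Px; destruct (hP x Px)]. Qed.

Lemma at_most_S n (P : T -> Prop) :
  (forall x, P x -> at_most n (fun y => P y /\ y <> x)) -> at_most (S n) P.
Proof.
  intros hP. destruct (classic (exists x, P x)) as [[x Px] | none].
  - destruct (hP x Px) as [L [hL HL]]. exists (x :: L). split; [simpl; lia |].
    intros y Py. destruct (classic (y = x)) as [-> | ne]; [left | right]; auto.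
  - exists nil. split; [simpl; lia | intros x Px; exfalso; eauto].
Qed.

Lemma at_most_1_intro (P : T -> Prop) :
  (forall x y, P x -> P y -> x = y) -> at_most 1 P.
Proof.
  intros hP. apply at_most_S. intros x Px. apply at_most_0.
  intros y [Py ne]. exact (ne (hP y x Py Px)).
Qed.

Lemma at_most_2_intro (P : T -> Prop) :
  (forall x y z, P x -> P y -> P z -> x <> y -> x <> z -> y <> z -> False) ->
  at_most 2 P.
Proof.
  intros hP. apply at_most_S. intros x Px. apply at_most_1_intro.
  intros y z [Py nyx] [Pz nzx]. apply NNPP. intros nyz. eauto.
Qed.

Lemma at_most_or m n (P Q : T -> Prop) :
  at_most m P -> at_most n Q -> at_most (m + n) (fun x => P x \/ Q x).
Proof.
  intros [L [hL HL]] [L' [hL' HL']]. exists (L ++ L').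
  split; [rewrite length_app; lia |].
  intros x [Px | Qx]; apply in_or_app; auto.
Qed.

Lemma count_between k m (P : T -> Prop) :
  at_least k P -> at_most m P ->
  exists l, NoDup l /\ (forall x, In x l <-> P x) /\ (k <= length l <= m)%nat.
Proof.
  intros [l0 [hl0 [<- Hl0]]] [L [hL HL]].
  pose (dec := fun x y : T => excluded_middle_informative (x = y)).
  pose (Pb := fun x => if excluded_middle_informative (P x) then true else false).
  assert (hPb : forall x, Pb x = true <-> P x).
  { intros x. unfold Pb. destruct (excluded_middle_informative (P x)); split;
      easy || discriminate. }
  assert (Hl : forall x, In x (nodup dec (filter Pb L)) <-> P x).
  { intros x. rewrite nodup_In, filter_In, hPb. split; [tauto | auto]. }
  exists (nodup dec (filter Pb L)). split; [apply NoDup_nodup | split; [exact Hl | split]].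
  - apply NoDup_incl_length; auto. intros x hx. apply Hl. auto.
  - apply Nat.le_trans with (length L); [| exact hL].
    apply NoDup_incl_length; [apply NoDup_nodup |].
    intros x hx. apply HL, Hl. exact hx.
Qed.
End Counting.

Lemma at_most_image {T U : Type} n (P : T -> Prop) (g : T -> U) :
  at_most n P -> at_most n (fun y => exists x, P x /\ y = g x).
Proof.
  intros [L [hL HL]]. exists (map g L). split; [rewrite length_map; auto |].
  intros y [x [Px ->]]. apply in_map. auto.
Qed.

Inductive monic : nat -> (R -> R) -> Prop :=
  | monic_one : monic 0 (fun _ => 1)
  | monic_horner n g c : monic n g -> monic (S n) (fun x => x * g x + c).

Lemma monic_factor n g r :
  monic (S n) g -> exists h, monic n h /\ forall x, g x = (x - r) * h x + g r.
Proof.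
  revert g. induction n as [| n IH]; intros g hg; inversion hg as [| ? g0 c hg0]; subst.
  - inversion hg0; subst. exists (fun _ => 1). split; [constructor | intros x; ring].
  - destruct (IH g0 hg0) as [h0 [hh0 Hh0]].
    exists (fun x => x * h0 x + g0 r). split; [constructor; exact hh0 |].
    intros x. rewrite (Hh0 x). ring.
Qed.

Lemma monic_roots_at_most n g : monic n g -> at_most n (fun x => g x = 0).
Proof.
  revert g. induction n as [| n IH]; intros g hg.
  - inversion hg; subst. apply at_most_0. intros x. lra.
  - destruct (classic (exists r, g r = 0)) as [[r hr] | none].
    + destruct (monic_factor n g r hg) as [h [hh Hh]].
      apply (at_most_impl (1 + n) _ (fun x => x = r \/ h x = 0)); [lia | | apply at_most_or].
      * intros x hx. rewrite Hh, hr, Rplus_0_r in hx.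
        apply Rmult_integral in hx. destruct hx; [left | right]; lra.
      * apply at_most_1_intro. intros x y -> ->. reflexivity.
      * apply IH, hh.
    + apply (at_most_impl 0 _ (fun x => False)); [lia | | apply at_most_0; intros x hx; exact hx].
      intros x hx. apply none. eauto.
Qed.

Definition q (a b x : R) : R := x^4 - x^2 - a*x - b.

Lemma q_roots_at_most_4 a b : at_most 4 (fun x => q a b x = 0).
Proof.
  apply (at_most_impl 4 4 (fun x => x * (x * (x * (x * 1 + 0) + -1) + -a) + -b = 0));
    [lia | intros x hx; unfold q in hx; lra |].
  apply monic_roots_at_most. repeat constructor.
Qed.

Definition p1 (a b x y : R) : R := x^4 + y^4 - 6*x^2*y^2 - x^2 + y^2 - a*x - b.
Definition p2 (a x y : R) : R := 4*x*y^2 - 4*x^3 - 2*x - a.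

Lemma f_eq0 a b x y : Defs.f a b (x, y) = 0 <-> p1 a b x y = 0 /\ y * p2 a x y = 0.
Proof.
  assert (E : Defs.f a b (x, y) = (p1 a b x y, y * p2 a x y)).
  { unfold Defs.f, p1, p2, Cminus, Cmult, Cconj, Copp, Cplus, RtoC; simpl. f_equal; ring. }
  rewrite E. unfold RtoC. split; [intros h; injection h; tauto | intros [-> ->]; reflexivity].
Qed.

Lemma f_eq0_real a b x : Defs.f a b (x, 0) = 0 <-> q a b x = 0.
Proof. rewrite f_eq0. unfold p1, q. split; [intros [h _] | intros h; split]; lra. Qed.

Definition s (a x : R) : R := (4*x^3 + 2*x + a) / (4*x).

Definition G (a b x : R) : R :=
  64*x^6 + 32*x^4 + 32*a*x^3 + (16*b - 12)*x^2 - 8*a*x - a^2.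

Lemma f_eq0_nonreal a b x y :
  x <> 0 -> y <> 0 -> (Defs.f a b (x, y) = 0 <-> y^2 = s a x /\ G a b x = 0).
Proof.
  intros hx hy. rewrite f_eq0.
  assert (hp2 : p2 a x y = 0 <-> y^2 = s a x).
  { unfold p2, s. split; intros h.
    - replace a with (4*x*y^2 - 4*x^3 - 2*x) by lra. field. exact hx.
    - rewrite h. field. exact hx. }
  assert (hG : p2 a x y = 0 -> G a b x = -16*x^2 * p1 a b x y).
  { intros h. unfold p2 in h. replace a with (4*x*y^2 - 4*x^3 - 2*x) by lra.
    unfold G, p1. ring. }
  assert (hx2 : -16*x^2 <> 0) by (assert (0 < x^2) by (apply pow2_gt_0; exact hx); lra).
  split.
  - intros [h1 h2]. apply Rmult_integral in h2. destruct h2 as [h2 | h2]; [contradiction |].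
    split; [apply hp2, h2 |]. rewrite (hG h2), h1. ring.
  - intros [hs hGx]. apply hp2 in hs. split; [| rewrite hs; ring].
    rewrite (hG hs) in hGx. apply Rmult_integral in hGx. destruct hGx; [contradiction | auto].
Qed.

Ltac positivity :=
  repeat match goal with
  | |- 0 < _ + _ => apply Rplus_lt_0_compat
  | |- 0 < _ * _ => apply Rmult_lt_0_compat
  | |- 0 < _ ^ _ => apply pow_lt
  end; try lra.

Lemma ivt_open (g : R -> R) x y :
  continuity g -> x < y -> g x * g y < 0 -> exists r, x < r < y /\ g r = 0.
Proof.
  intros hg hxy hs.
  destruct (IVT_cor g x y hg (Rlt_le _ _ hxy) (Rlt_le _ _ hs)) as [r [[h1 h2] hr]].
  exists r. split; [split |]; auto.
  - destruct h1 as [h1 | <-]; [exact h1 | rewrite hr in hs; lra].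
  - destruct h2 as [h2 | ->]; [exact h2 | rewrite hr in hs; lra].
Qed.

Lemma cubic_root a : 0 < a -> exists c, 0 < c /\ 4*c^3 + 2*c = a.
Proof.
  intros ha. destruct (ivt_open (fun x => 4*x^3 + 2*x - a) 0 a) as [c [[hc _] e]];
    [reg | exact ha | simpl; nra |].
  exists c. split; [exact hc | lra].
Qed.

Lemma cubic_neg_iff c x : 4*x^3 + 2*x + (4*c^3 + 2*c) < 0 <-> x < -c.
Proof.
  replace (4*x^3 + 2*x + (4*c^3 + 2*c)) with ((x + c) * ((2*x - c)^2 + 3*c^2 + 2))
    by ring.
  assert (0 < (2*x - c)^2 + 3*c^2 + 2) by nra.
  split; intros h; nra.
Qed.

Lemma s_pos a x : 0 < a -> 0 < x -> 0 < s a x.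
Proof. intros ha hx. unfold s. apply Rdiv_lt_0_compat; positivity. Qed.

Lemma s_pos_iff_neg a x : x < 0 -> (0 < s a x <-> 4*x^3 + 2*x + a < 0).
Proof.
  intros hx. unfold s. split; intros h.
  - replace (4*x^3 + 2*x + a) with ((4*x^3 + 2*x + a) / (4*x) * (4*x)) by (field; lra).
    nra.
  - apply Rdiv_neg_neg; lra.
Qed.

Lemma eq_of_sub_mul_pos x y K : 0 < K -> (x - y) * K = 0 -> x = y.
Proof. intros hK h. apply Rmult_integral in h. destruct h; lra. Qed.

Lemma distinct3_mul_pos t1 t2 t3 K :
  t1 <> t2 -> t1 <> t3 -> t2 <> t3 -> 0 < K -> (t3 - t2) * (t2 - t1) * (t3 - t1) * K <> 0.
Proof.
  intros. repeat apply Rmult_integral_contrapositive_currified; lra.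
Qed.

(* [G x / x^2] is strictly increasing on [(0, +oo)]. *)
Lemma G_pos_root_unique a b x1 x2 :
  0 < a -> 0 < x1 -> 0 < x2 -> G a b x1 = 0 -> G a b x2 = 0 -> x1 = x2.
Proof.
  intros ha h1 h2 e1 e2. symmetry. apply (eq_of_sub_mul_pos x2 x1
    (x1^2*x2^2*(64*(x2+x1)*(x2^2+x1^2) + 32*(x2+x1) + 32*a) + 8*a*x1*x2 + a^2*(x1+x2)));
    [positivity |].
  transitivity (x1^2 * G a b x2 - x2^2 * G a b x1); [unfold G; ring | rewrite e1, e2; ring].
Qed.

Lemma G_pos_roots_at_most_1 a b : 0 < a -> at_most 1 (fun x => 0 < x /\ G a b x = 0).
Proof.
  intros ha. apply at_most_1_intro. intros x y [hx ex] [hy ey].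
  exact (G_pos_root_unique a b x y ha hx hy ex ey).
Qed.

Definition Gt (c b t : R) : R :=
  64*t^6 + 384*c*t^5 + (32 + 960*c^2)*t^4 + (64*c + 1152*c^3)*t^3
  + (576*c^4 + 16*b - 12)*t^2 + 8*c*(4*b - 1 - 4*c^2)*t + 16*c^2*(b - c^2 - 5*c^4).

Lemma G_shift c b t : G (4*c^3 + 2*c) b (-c - t) = Gt c b t.
Proof. unfold G, Gt. ring. Qed.

Lemma Gt_pos_root_unique c b t1 t2 : 0 < c -> b < c^2 + 5*c^4 ->
  0 < t1 -> 0 < t2 -> Gt c b t1 = 0 -> Gt c b t2 = 0 -> t1 = t2.
Proof.
  intros hc hb h1 h2 e1 e2. symmetry.
  set (B := 8*c*(4*b - 1 - 4*c^2)).
  destruct (Rle_or_lt B 0) as [hB | hB].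
  - (* [Gt t / t^2] is strictly increasing *)
    apply (eq_of_sub_mul_pos t2 t1
      (t1^2*t2^2*(64*(t1+t2)*(t1^2+t2^2) + 384*c*(t1^2+t1*t2+t2^2)
         + (32+960*c^2)*(t1+t2) + (64*c+1152*c^3))
       - B*t1*t2 - 16*c^2*(b - c^2 - 5*c^4)*(t1+t2))).
    + assert (0 < t1^2*t2^2*(64*(t1+t2)*(t1^2+t2^2) + 384*c*(t1^2+t1*t2+t2^2)
         + (32+960*c^2)*(t1+t2) + (64*c+1152*c^3))) by positivity.
      assert (0 <= - B*t1*t2) by (assert (0 < t1*t2) by positivity; nra).
      assert (0 < -16*c^2*(b - c^2 - 5*c^4)*(t1+t2)).
      { replace (-16*c^2*(b - c^2 - 5*c^4)*(t1+t2)) with (16*c^2*(c^2 + 5*c^4 - b)*(t1+t2))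
          by ring. positivity. }
      lra.
    + transitivity (t1^2 * Gt c b t2 - t2^2 * Gt c b t1);
        [unfold Gt, B; ring | rewrite e1, e2; ring].
  - (* all coefficients but the constant one are positive, so [Gt] is increasing *)
    set (A := 576*c^4 + 16*b - 12).
    assert (hA : 0 < A).
    { assert (0 < 4*b - 1 - 4*c^2) by (unfold B in hB; assert (0 < 8*c) by positivity; nra).
      assert (0 < c^2) by positivity. unfold A. lra. }
    apply (eq_of_sub_mul_pos t2 t1
      (64*(t2^5+t2^4*t1+t2^3*t1^2+t2^2*t1^3+t2*t1^4+t1^5)
       + 384*c*(t2^4+t2^3*t1+t2^2*t1^2+t2*t1^3+t1^4)
       + (32+960*c^2)*(t2^3+t2^2*t1+t2*t1^2+t1^3)
       + (64*c+1152*c^3)*(t2^2+t2*t1+t1^2) + A*(t2+t1) + B)); [positivity |].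
    transitivity (Gt c b t2 - Gt c b t1); [unfold Gt, A, B; ring | rewrite e1, e2; ring].
Qed.

Lemma Gt_no_three_pos_roots c b t1 t2 t3 : 0 < c -> c^2 + 5*c^4 <= b ->
  0 < t1 -> 0 < t2 -> 0 < t3 -> t1 <> t2 -> t1 <> t3 -> t2 <> t3 ->
  Gt c b t1 = 0 -> Gt c b t2 = 0 -> Gt c b t3 = 0 -> False.
Proof.
  intros hc hb h1 h2 h3 n12 n13 n23 e1 e2 e3.
  set (B := 8*c*(4*b - 1 - 4*c^2)). set (C0 := 16*c^2*(b - c^2 - 5*c^4)).
  assert (hC0 : 0 <= C0) by (unfold C0; assert (0 < 16*c^2) by positivity; nra).
  destruct (Rle_or_lt 0 B) as [hB | hB].
  - (* [Gt t / t^2] is strictly convex *)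
    apply (distinct3_mul_pos t1 t2 t3
      ((t1*t2*t3)^2 * (64*(t1^2+t2^2+t3^2+t1*t2+t1*t3+t2*t3) + 384*c*(t1+t2+t3)
         + (32+960*c^2)) + B*(t1*t2*t3) + C0*(t1*t2+t1*t3+t2*t3))); auto.
    + assert (0 < (t1*t2*t3)^2 * (64*(t1^2+t2^2+t3^2+t1*t2+t1*t3+t2*t3)
        + 384*c*(t1+t2+t3) + (32+960*c^2))) by positivity.
      assert (0 <= B*(t1*t2*t3)) by (apply Rmult_le_pos; [lra | left; positivity]).
      assert (0 <= C0*(t1*t2+t1*t3+t2*t3)) by (apply Rmult_le_pos; [lra | left; positivity]).
      lra.
    + transitivity ((t3-t2)*t2^2*t3^2*Gt c b t1 - (t3-t1)*t1^2*t3^2*Gt c b t2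
        + (t2-t1)*t1^2*t2^2*Gt c b t3); [unfold Gt, B, C0; ring | rewrite e1, e2, e3; ring].
  - (* [Gt t / t] is strictly convex *)
    apply (distinct3_mul_pos t1 t2 t3
      ((t1*t2*t3) * (64*(t1^3+t2^3+t3^3+t1^2*t2+t1^2*t3+t2^2*t1+t2^2*t3+t3^2*t1+t3^2*t2
         + t1*t2*t3) + 384*c*(t1^2+t2^2+t3^2+t1*t2+t1*t3+t2*t3)
         + (32+960*c^2)*(t1+t2+t3) + (64*c+1152*c^3)) + C0)); auto.
    + assert (0 < (t1*t2*t3) * (64*(t1^3+t2^3+t3^3+t1^2*t2+t1^2*t3+t2^2*t1+t2^2*t3+t3^2*t1
        + t3^2*t2 + t1*t2*t3) + 384*c*(t1^2+t2^2+t3^2+t1*t2+t1*t3+t2*t3)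
        + (32+960*c^2)*(t1+t2+t3) + (64*c+1152*c^3))) by positivity.
      lra.
    + transitivity ((t3-t2)*t2*t3*Gt c b t1 - (t3-t1)*t1*t3*Gt c b t2
        + (t2-t1)*t1*t2*Gt c b t3); [unfold Gt, C0; ring | rewrite e1, e2, e3; ring].
Qed.

Lemma Gt_pos_roots_at_most_2 c b : 0 < c -> at_most 2 (fun t => 0 < t /\ Gt c b t = 0).
Proof.
  intros hc. apply at_most_2_intro. intros t1 t2 t3 [h1 e1] [h2 e2] [h3 e3] n12 n13 n23.
  destruct (Rlt_or_le b (c^2 + 5*c^4)) as [hb | hb].
  - exact (n12 (Gt_pos_root_unique c b t1 t2 hc hb h1 h2 e1 e2)).
  - exact (Gt_no_three_pos_roots c b t1 t2 t3 hc hb h1 h2 h3 n12 n13 n23 e1 e2 e3).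
Qed.

Lemma q_G_pos_far a b x : 0 <= a -> Rabs x = 2 + a + Rabs b -> 0 < q a b x /\ 0 < G a b x.
Proof.
  intros ha hx. set (M := 2 + a + Rabs b) in hx.
  assert (hb : Rabs b <= M - 2 - a) by (unfold M; lra).
  assert (hb' : - (M - 2 - a) <= b <= M - 2 - a) by (apply Rabs_le_between; lra).
  assert (hM : 2 <= M) by (unfold M; pose proof (Rabs_pos b); lra).
  assert (hx2 : x^2 = M^2) by (rewrite <- hx, <- Rsqr_pow2, <- Rsqr_pow2; apply Rsqr_abs).
  assert (hax : Rabs (a*x) <= M^2) by (rewrite Rabs_mult, hx, Rabs_pos_eq; nra).
  apply Rabs_le_between in hax.
  assert (hx4 : x^4 = M^2*M^2) by (replace (x^4) with (x^2*x^2) by ring; rewrite hx2; ring).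
  assert (hx6 : x^6 = M^2*M^2*M^2) by (replace (x^6) with (x^2*x^2*x^2) by ring; rewrite hx2; ring).
  assert (hax3 : -(M^2*M^2) <= a*x^3 <= M^2*M^2)
    by (replace (a*x^3) with (a*x*x^2) by ring; rewrite hx2; split; nra).
  unfold q, G. rewrite hx2, hx4, hx6. set (m := M^2) in *.
  assert (hm : 2*M <= m) by (unfold m; nra).
  assert (ha2 : a^2 <= m) by (unfold m; nra).
  assert (hbm : - (M*m) <= b*m) by (assert (0 <= m) by (unfold m; nra); nra).
  assert (hm3 : 4*m*m <= m*m*m) by (assert (4 <= m) by lra; assert (0 <= m*m) by nra; nra).
  split; nra.
Qed.

Lemma sq_cases u y : y^2 = u -> y = sqrt u \/ y = - sqrt u.
Proof.
  intros <-. rewrite <- Rsqr_pow2, sqrt_Rsqr_abs. unfold Rabs.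
  destruct (Rcase_abs y); [right; ring | left; reflexivity].
Qed.

Lemma sqrt_sq_pow u : 0 <= u -> sqrt u ^ 2 = u.
Proof. intros hu. rewrite <- Rsqr_pow2. apply Rsqr_sqrt, hu. Qed.

Lemma opp_sqrt_sq_pow u : 0 <= u -> (- sqrt u) ^ 2 = u.
Proof. intros hu. rewrite <- sqrt_sq_pow by exact hu. ring. Qed.

Lemma zeros_at_most_10_pos a b : 0 < a -> at_most 10 (fun z => Defs.f a b z = 0).
Proof.
  intros ha. destruct (cubic_root a ha) as [c [hc hca]].
  set (X := fun x => (0 < x \/ x < -c) /\ G a b x = 0).
  assert (hX : at_most 3 X).
  { apply (at_most_impl (1 + 2) 3 (fun x => (0 < x /\ G a b x = 0) \/
                                         (exists t, (0 < t /\ Gt c b t = 0) /\ x = -c - t)));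
      [lia | | apply at_most_or; [apply G_pos_roots_at_most_1, ha |
                                  apply at_most_image, Gt_pos_roots_at_most_2, hc]].
    intros x [[hx | hx] hG]; [left; auto | right].
    exists (-c - x). split; [split; [lra | rewrite <- G_shift, hca] |];
      ring_simplify (-c - (-c - x)); auto. }
  apply (at_most_impl (4 + (3 + 3)) 10 (fun z =>
      (exists x, q a b x = 0 /\ z = (x, 0)) \/
      ((exists x, X x /\ z = (x, sqrt (s a x))) \/ (exists x, X x /\ z = (x, - sqrt (s a x)))))).
  - lia.
  - intros [x y] hz. destruct (Req_dec y 0) as [-> | hy].
    + left. exists x. split; [apply f_eq0_real |]; auto.
    + right. assert (hx : x <> 0).
      { intros ->. apply f_eq0 in hz. destruct hz as [_ hz]. unfold p2 in hz.
        apply Rmult_integral in hz. lra. }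
      apply f_eq0_nonreal in hz; [| exact hx | exact hy]. destruct hz as [hs hG].
      assert (hXx : X x).
      { split; [| exact hG]. destruct (Rlt_or_le 0 x) as [hxp | hxn]; [left; exact hxp | right].
        apply cubic_neg_iff. rewrite hca. apply s_pos_iff_neg; [lra |].
        rewrite <- hs. apply pow2_gt_0, hy. }
      destruct (sq_cases (s a x) y hs) as [-> | ->]; [left | right]; eauto.
  - apply at_most_or; [apply at_most_image, q_roots_at_most_4 |].
    apply at_most_or; apply at_most_image, hX.
Qed.

Ltac not_in_points :=
  let H := fresh in
  intros H; repeat match type of H with _ \/ _ => destruct H as [H | H] end;
  try contradiction; injection H; intros; lra.

Ltac distinct_points :=
  repeat (apply NoDup_cons; [simpl; not_in_points |]); apply NoDup_nil.

Lemma f_eq0_of_G_root a b x : x <> 0 -> 0 < s a x -> G a b x = 0 ->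
  Defs.f a b (x, sqrt (s a x)) = 0 /\ Defs.f a b (x, - sqrt (s a x)) = 0.
Proof.
  intros hx hs hG. assert (hr : 0 < sqrt (s a x)) by (apply sqrt_lt_R0, hs).
  split; (apply f_eq0_nonreal; [lra | lra | split; [| exact hG]]);
    [apply sqrt_sq_pow | apply opp_sqrt_sq_pow]; lra.
Qed.

Lemma G_at_neg_c c b : G (4*c^3 + 2*c) b (-c) = -16*c^2 * q (4*c^3 + 2*c) b (-c).
Proof. unfold G, q. ring. Qed.

Lemma Delta1_on_curve c : Delta1 (4*c^3 + 2*c) (c^2 + 5*c^4) = 0.
Proof. unfold Delta1. ring. Qed.

Lemma zeros_at_least_4_pos a b :
  0 < a -> Delta1 a b <> 0 -> at_least 4 (fun z => Defs.f a b z = 0).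
Proof.
  intros ha hD. destruct (cubic_root a ha) as [c [hc hca]].
  set (M := 2 + a + Rabs b).
  assert (hM : Rabs M = M) by (apply Rabs_pos_eq; unfold M; pose proof (Rabs_pos b); lra).
  assert (hcM : c < M).
  { unfold M. pose proof (Rabs_pos b). assert (0 < c^3) by positivity. lra. }
  destruct (q_G_pos_far a b M) as [qM GM]; [lra | exact hM |].
  destruct (q_G_pos_far a b (-M)) as [qmM GmM]; [lra | rewrite Rabs_Ropp; exact hM |].
  assert (cq : continuity (q a b)) by (unfold q; reg).
  assert (cG : continuity (G a b)) by (unfold G; reg).
  destruct (ivt_open (G a b) 0 M cG) as [xi [[hxi _] Gxi]];
    [lra | replace (G a b 0) with (- a^2) by (unfold G; ring);
     assert (0 < a^2 * G a b M) by positivity; lra |].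
  destruct (f_eq0_of_G_root a b xi) as [Z1 Z2]; [lra | apply s_pos; lra | exact Gxi |].
  assert (hsxi : 0 < sqrt (s a xi)) by (apply sqrt_lt_R0, s_pos; lra).
  destruct (Rtotal_order (q a b (-c)) 0) as [hq | [hq | hq]].
  - destruct (ivt_open (q a b) (-M) (-c) cq) as [r1 [hr1 qr1]]; [lra | nra |].
    destruct (ivt_open (q a b) (-c) M cq) as [r2 [hr2 qr2]]; [lra | nra |].
    exists ((r1, 0) :: (r2, 0) :: (xi, sqrt (s a xi)) :: (xi, - sqrt (s a xi)) :: nil).
    split; [distinct_points | split; [reflexivity |]].
    intros z Hz; repeat destruct Hz as [<- | Hz]; try contradiction; auto; apply f_eq0_real; auto.
  - exfalso. apply hD. rewrite <- hca. replace b with (c^2 + 5*c^4)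
      by (unfold q in hq; rewrite <- hca in hq; lra).
    apply Delta1_on_curve.
  - assert (hGc : G a b (-c) < 0).
    { rewrite <- hca in *. rewrite G_at_neg_c. assert (0 < c^2) by positivity. nra. }
    destruct (ivt_open (G a b) (-M) (-c) cG) as [x1 [hx1 Gx1]]; [lra | nra |].
    assert (hsx1 : 0 < s a x1).
    { apply s_pos_iff_neg; [lra |]. rewrite <- hca. apply cubic_neg_iff. lra. }
    destruct (f_eq0_of_G_root a b x1) as [Z3 Z4]; [lra | exact hsx1 | exact Gx1 |].
    assert (hsx1' : 0 < sqrt (s a x1)) by (apply sqrt_lt_R0, hsx1).
    exists ((x1, sqrt (s a x1)) :: (x1, - sqrt (s a x1)) ::
            (xi, sqrt (s a xi)) :: (xi, - sqrt (s a xi)) :: nil).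
    split; [distinct_points | split; [reflexivity |]].
    intros z Hz; repeat destruct Hz as [<- | Hz]; try contradiction; auto.
Qed.

Lemma nonneg_root_quadratic p r u :
  0 <= p -> 0 <= u -> u^2 + p*u + r = 0 -> u = (sqrt (p^2 - 4*r) - p) / 2.
Proof.
  intros hp hu e. replace (p^2 - 4*r) with (Rsqr (2*u + p)) by (unfold Rsqr; nra).
  rewrite sqrt_Rsqr; lra.
Qed.

Definition w0 (b : R) : R := (sqrt (1 + 4*b) - 1) / 2.
Definition v0 (b : R) : R := (sqrt (1 - b) - 1/2) / 2.

Lemma w0_eq b : -1/4 <= b -> w0 b ^ 2 + w0 b - b = 0.
Proof. intros hb. unfold w0. pose proof (sqrt_sq_pow (1 + 4*b)). nra. Qed.

Lemma v0_eq b : b <= 1 -> 4 * v0 b ^ 2 + 2 * v0 b + b - 3/4 = 0.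
Proof. intros hb. unfold v0. pose proof (sqrt_sq_pow (1 - b)). nra. Qed.

Definition nonreal_zeros0 (b : R) : list C :=
  (0, sqrt (w0 b)) :: (0, - sqrt (w0 b)) ::
  (sqrt (v0 b), sqrt (v0 b + 1/2)) :: (sqrt (v0 b), - sqrt (v0 b + 1/2)) ::
  (- sqrt (v0 b), sqrt (v0 b + 1/2)) :: (- sqrt (v0 b), - sqrt (v0 b + 1/2)) :: nil.

Lemma f0_nonreal_zero_in b x y :
  y <> 0 -> Defs.f 0 b (x, y) = 0 -> In (x, y) (nonreal_zeros0 b).
Proof.
  intros hy hz. apply f_eq0 in hz. destruct hz as [e1 e2].
  apply Rmult_integral in e2. destruct e2 as [e2 | e2]; [contradiction |].
  unfold p1, p2 in *. unfold nonreal_zeros0. simpl.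
  destruct (Req_dec x 0) as [-> | hx].
  - assert (hw : y^2 = w0 b).
    { transitivity ((sqrt (1^2 - 4*(-b)) - 1) / 2);
        [apply nonneg_root_quadratic; nra | unfold w0; do 3 f_equal; ring]. }
    destruct (sq_cases _ _ hw) as [-> | ->]; auto.
  - assert (hy2 : y^2 = x^2 + 1/2).
    { assert (hxy : x * (4*y^2 - 4*x^2 - 2) = 0) by nra.
      apply Rmult_integral in hxy. destruct hxy; [contradiction | lra]. }
    assert (hv : x^2 = v0 b).
    { transitivity ((sqrt ((1/2)^2 - 4*((b - 3/4)/4)) - 1/2) / 2);
        [apply nonneg_root_quadratic; [lra | nra |] | unfold v0; do 3 f_equal; field].
      replace (y^4) with ((y^2)^2) in e1 by ring. rewrite hy2 in e1. nra. }
    destruct (sq_cases _ _ hv) as [-> | ->];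
      (destruct (sq_cases (v0 b + 1/2) y ltac:(lra)) as [-> | ->]); auto 7.
Qed.

Lemma zeros_at_most_10_zero b : at_most 10 (fun z => Defs.f 0 b z = 0).
Proof.
  apply (at_most_impl (4 + 6) 10 (fun z =>
    (exists x, q 0 b x = 0 /\ z = (x, 0)) \/ In z (nonreal_zeros0 b))); [lia | |].
  - intros [x y] hz. destruct (Req_dec y 0) as [-> | hy].
    + left. exists x. split; [apply f_eq0_real |]; auto.
    + right. apply f0_nonreal_zero_in; auto.
  - apply at_most_or;
      [apply at_most_image, q_roots_at_most_4 | exact (at_most_list (nonreal_zeros0 b))].
Qed.

Lemma f0_eq0_of_squares b x y X Y : x^2 = X -> y^2 = Y ->
  X^2 + Y^2 - 6*X*Y - X + Y - b = 0 -> (x = 0 \/ 4*Y - 4*X - 2 = 0 \/ y = 0) ->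
  Defs.f 0 b (x, y) = 0.
Proof.
  intros hX hY e h. apply f_eq0. unfold p1, p2. split.
  - replace (x^4) with ((x^2)^2) by ring. replace (y^4) with ((y^2)^2) by ring.
    rewrite hX, hY. lra.
  - replace (y * (4*x*y^2 - 4*x^3 - 2*x - 0)) with (x*y*(4*y^2 - 4*x^2 - 2)) by ring.
    rewrite hY, hX. destruct h as [-> | [h | ->]]; [ring | rewrite h; ring | ring].
Qed.

Lemma zeros_at_least_4_zero b : at_least 4 (fun z => Defs.f 0 b z = 0).
Proof.
  destruct (Rle_or_lt (3/4) b) as [hb | hb].
  - set (w := w0 b).
    assert (hw : 0 < w).
    { unfold w, w0. pose proof (sqrt_sq_pow (1 + 4*b)). pose proof (sqrt_pos (1 + 4*b)). nra. }
    assert (ew := w0_eq b ltac:(lra)). fold w in ew.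
    assert (s1 : 0 < sqrt (w + 1)) by (apply sqrt_lt_R0; lra).
    assert (s2 : 0 < sqrt w) by (apply sqrt_lt_R0; lra).
    exists ((sqrt (w + 1), 0) :: (- sqrt (w + 1), 0) :: (0, sqrt w) :: (0, - sqrt w) :: nil).
    split; [distinct_points | split; [reflexivity |]].
    intros z Hz; repeat destruct Hz as [<- | Hz]; try contradiction.
    + apply (f0_eq0_of_squares b _ _ (w + 1) 0); [apply sqrt_sq_pow | ring | | right; right]; nra.
    + apply (f0_eq0_of_squares b _ _ (w + 1) 0);
        [apply opp_sqrt_sq_pow | ring | | right; right]; nra.
    + apply (f0_eq0_of_squares b _ _ 0 w); [ring | apply sqrt_sq_pow | | left]; nra.
    + apply (f0_eq0_of_squares b _ _ 0 w); [ring | apply opp_sqrt_sq_pow | | left]; nra.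
  - set (v := v0 b).
    assert (hv : 0 < v).
    { unfold v, v0. pose proof (sqrt_sq_pow (1 - b)). pose proof (sqrt_pos (1 - b)). nra. }
    assert (ev := v0_eq b ltac:(lra)). fold v in ev.
    assert (s1 : 0 < sqrt v) by (apply sqrt_lt_R0; lra).
    assert (s2 : 0 < sqrt (v + 1/2)) by (apply sqrt_lt_R0; lra).
    exists ((sqrt v, sqrt (v + 1/2)) :: (sqrt v, - sqrt (v + 1/2)) ::
            (- sqrt v, sqrt (v + 1/2)) :: (- sqrt v, - sqrt (v + 1/2)) :: nil).
    split; [distinct_points | split; [reflexivity |]].
    intros z Hz; repeat destruct Hz as [<- | Hz]; try contradiction;
      apply (f0_eq0_of_squares b _ _ v (v + 1/2));
      first [apply sqrt_sq_pow | apply opp_sqrt_sq_pow | nra | right; left; lra]; lra.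
Qed.

Lemma num_zeros_between k m a b :
  at_least k (fun z => Defs.f a b z = 0) -> at_most m (fun z => Defs.f a b z = 0) ->
  exists n, num_zeros a b n /\ (k <= n <= m)%nat.
Proof.
  intros hk hm. destruct (count_between k m _ hk hm) as [l [hl [Hl hn]]].
  exists (length l). split; [exists l; auto | exact hn].
Qed.

Lemma num_zeros_opp a b n : num_zeros (-a) b n -> num_zeros a b n.
Proof.
  assert (f_opp : forall z, Defs.f (-a) b (Copp z) = Defs.f a b z).
  { intros [x y]. unfold Defs.f, Cminus, Cmult, Cconj, Copp, Cplus, RtoC; simpl. f_equal; ring. }
  assert (Copp_inv : forall z : C, Copp (Copp z) = z).
  { intros [x y]. unfold Copp; simpl. f_equal; ring. }
  intros [l [hl [Hl hn]]]. exists (map Copp l). split; [| split].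
  - apply NoDup_map_NoDup_ForallPairs; [| exact hl].
    intros z w _ _ e. rewrite <- (Copp_inv z), <- (Copp_inv w), e. reflexivity.
  - intros z. rewrite in_map_iff. split.
    + intros [w [<- hw]]. rewrite <- f_opp, Copp_inv. apply Hl, hw.
    + intros hz. exists (Copp z). split; [apply Copp_inv | apply Hl; rewrite f_opp; exact hz].
  - rewrite length_map. exact hn.
Qed.

Lemma num_zeros_4_to_10 a b :
  Delta1 a b <> 0 -> exists n, num_zeros a b n /\ (4 <= n <= 10)%nat.
Proof.
  assert (nonneg : forall a, 0 <= a -> Delta1 a b <> 0 ->
                     exists n, num_zeros a b n /\ (4 <= n <= 10)%nat).
  { intros a' [ha | <-] hD; apply num_zeros_between.
    - apply zeros_at_least_4_pos; auto.
    - apply zeros_at_most_10_pos, ha.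
    - apply zeros_at_least_4_zero.
    - apply zeros_at_most_10_zero. }
  intros hD. destruct (Rle_or_lt 0 a) as [ha | ha]; [apply nonneg; auto |].
  destruct (nonneg (-a)) as [n [hn hb]]; [lra | | exists n; split; [apply num_zeros_opp |]; auto].
  replace (Delta1 (-a) b) with (Delta1 a b) by (unfold Delta1; ring). exact hD.
Qed.

Lemma example_4_zeros : num_zeros 0 (-1) 4.
Proof.
  destruct (num_zeros_between 4 4 0 (-1)) as [n [hn hn4]];
    [apply zeros_at_least_4_zero | | replace n with 4%nat in hn by lia; exact hn].
  apply (at_most_impl 4 4 (fun z => In z (skipn 2 (nonreal_zeros0 (-1)))));
    [lia | | exact (at_most_list (skipn 2 (nonreal_zeros0 (-1))))].
  intros [x y] hz. destruct (Req_dec y 0) as [-> | hy].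
  - apply f_eq0_real in hz. unfold q in hz. exfalso. nra.
  - apply f0_nonreal_zero_in in hz as hin; [| exact hy].
    destruct hin as [e | [e | hin]]; [| | exact hin]; injection e as <- _;
      apply f_eq0 in hz; destruct hz as [hz _]; unfold p1 in hz; nra.
Qed.

Lemma example_10_zeros : num_zeros (1/2) (33/500) 10.
Proof.
  set (a := 1/2). set (b := 33/500).
  destruct (num_zeros_between 10 10 a b) as [n [hn hn10]];
    [| apply zeros_at_most_10_pos; unfold a; lra | replace n with 10%nat in hn by lia; exact hn].
  assert (cq : continuity (q a b)) by (unfold q; reg).
  assert (cG : continuity (G a b)) by (unfold G; reg).
  destruct (ivt_open _ (-3/5) (-1/2) cq) as [r1 [hr1 qr1]]; [lra | unfold q, a, b; lra |].
  destruct (ivt_open _ (-1/2) (-3/10) cq) as [r2 [hr2 qr2]]; [lra | unfold q, a, b; lra |].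
  destruct (ivt_open _ (-3/10) 0 cq) as [r3 [hr3 qr3]]; [lra | unfold q, a, b; lra |].
  destruct (ivt_open _ 0 2 cq) as [r4 [hr4 qr4]]; [lra | unfold q, a, b; lra |].
  destruct (ivt_open _ (-3/5) (-49/100) cG) as [x1 [hx1 Gx1]]; [lra | unfold G, a, b; lra |].
  destruct (ivt_open _ (-23/100) (-227/1000) cG) as [x2 [hx2 Gx2]]; [lra | unfold G, a, b; lra |].
  destruct (ivt_open _ 0 1 cG) as [x3 [hx3 Gx3]]; [lra | unfold G, a, b; lra |].
  assert (hs_neg : forall x, x < -227/1000 -> 0 < s a x).
  { intros x hx. apply s_pos_iff_neg; [lra |].
    assert (0 < 4*(x^2 + x*(-227/1000) + (-227/1000)^2) + 2) by nra.
    replace (4*x^3 + 2*x + a) with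
      ((x + 227/1000) * (4*(x^2 + x*(-227/1000) + (-227/1000)^2) + 2)
       + (4*(-227/1000)^3 + 2*(-227/1000) + a)) by field.
    unfold a. nra. }
  assert (s1 := hs_neg x1 ltac:(lra)). assert (s2 := hs_neg x2 ltac:(lra)).
  assert (s3 : 0 < s a x3) by (apply s_pos; unfold a; lra).
  destruct (f_eq0_of_G_root a b x1) as [Z1 Z1']; [lra | exact s1 | exact Gx1 |].
  destruct (f_eq0_of_G_root a b x2) as [Z2 Z2']; [lra | exact s2 | exact Gx2 |].
  destruct (f_eq0_of_G_root a b x3) as [Z3 Z3']; [lra | exact s3 | exact Gx3 |].
  assert (sq1 : 0 < sqrt (s a x1)) by (apply sqrt_lt_R0, s1).
  assert (sq2 : 0 < sqrt (s a x2)) by (apply sqrt_lt_R0, s2).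
  assert (sq3 : 0 < sqrt (s a x3)) by (apply sqrt_lt_R0, s3).
  exists ((r1, 0) :: (r2, 0) :: (r3, 0) :: (r4, 0) ::
          (x1, sqrt (s a x1)) :: (x1, - sqrt (s a x1)) ::
          (x2, sqrt (s a x2)) :: (x2, - sqrt (s a x2)) ::
          (x3, sqrt (s a x3)) :: (x3, - sqrt (s a x3)) :: nil).
  split; [distinct_points | split; [reflexivity |]].
  intros z Hz; repeat destruct Hz as [<- | Hz]; try contradiction; auto; apply f_eq0_real; auto.
Qed.

Theorem mainTheorem1 :
  (forall a b : R, Delta1 a b * Delta2 a b * Delta3 a b <> 0 ->
     exists n : nat, num_zeros a b n /\ (4 <= n <= 10)%nat) /\
  (exists a b : R, Delta1 a b * Delta2 a b * Delta3 a b <> 0 /\ num_zeros a b 4) /\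
  (exists a b : R, Delta1 a b * Delta2 a b * Delta3 a b <> 0 /\ num_zeros a b 10).
Proof.
  split; [| split].
  - intros a b hD. apply num_zeros_4_to_10. intros e. apply hD. rewrite e. ring.
  - exists 0, (-1). split; [unfold Delta1, Delta2, Delta3; lra | exact example_4_zeros].
  - exists (1/2), (33/500). split; [unfold Delta1, Delta2, Delta3; lra | exact example_10_zeros].
Qed.
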